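(* Let $E\subseteq\mathcal F(\mathbb Z^s,\bar K)$ be a translation-invariant subspace of finite dimension. Then $E$ is a characteristic subspace (i.e., spanned by finitely many characters $\theta\in\mathrm{Char}(\mathbb Z^s,\bar K^\times)$) if and only if its period lattice $\Lambda(E)$ is a characteristic sublattice, i.e. has finite index in $\mathbb Z^s$ coprime to $p$.
   Context: $K=\mathrm{GF}(p^r)$, $\bar K$ an algebraic closure; $\mathcal F(\mathbb Z^s,\bar K)$ is the space of all functions $\mathbb Z^s\to\bar K$; translation-invariant means stable under all $\tau_v:f\mapsto f(\cdot+v)$. $\mathrm{Char}(\mathbb Z^s,\bar K^\times)$ is the set of homomorphisms $\mathbb Z^s\to\bar K^\times$. The period lattice of $E$ is $\Lambda(E)=\{v\in\mathbb Z^s:\tau_v f=f\ \forall f\in E\}$ (it has finite index since $E$ is finite dimensional). A sublattice is characteristic if it equals $\bigcap_{i=1}^m\ker(\theta_i)$ for some characters $\theta_1,\ldots,\theta_m$; a finite-index sublattice is characteristic iff its index is coprime to $p$. *)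

From HB Require Import structures.
From mathcomp Require Import all_boot all_order all_algebra.
Set Implicit Arguments. Unset Strict Implicit. Unset Printing Implicit Defensive.
Import Order.TTheory GRing.Theory Num.Theory.
Local Open Scope ring_scope.

(* Z^s is modelled as the row vectors 'rV[int]_s; functions Z^s -> F are
   plain Coq functions.  F plays the role of \bar K. *)

(* F is algebraic over its prime field F_p (char p): every element lies in
   a finite subfield, i.e. x ^+ (p ^ n) = x for some n >= 1. *)
Definition algebraic_over_Fp (F : fieldType) (p : nat) : Prop :=
  forall x : F, exists2 n : nat, (0 < n)%N & x ^+ (p ^ n) = x.

Definition transl (s : nat) (F : Type) (v : 'rV[int]_s) (f : 'rV[int]_s -> F)
  : 'rV[int]_s -> F := fun x => f (x + v).

Definition span (s : nat) (F : fieldType) (n : nat) (fs : 'I_n -> 'rV[int]_s -> F)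
  (g : 'rV[int]_s -> F) : Prop :=
  exists c : 'I_n -> F, forall x, g x = \sum_(i < n) c i * fs i x.

Definition fin_dim_subspace (s : nat) (F : fieldType) (E : ('rV[int]_s -> F) -> Prop) : Prop :=
  exists n (fs : 'I_n -> 'rV[int]_s -> F), forall g, E g <-> span fs g.

Definition transl_invariant (s : nat) (F : Type) (E : ('rV[int]_s -> F) -> Prop) : Prop :=
  forall v f, E f -> E (transl v f).

Definition is_character (s : nat) (F : fieldType) (th : 'rV[int]_s -> F) : Prop :=
  th 0 = 1 /\ forall u v, th (u + v) = th u * th v.

Definition characteristic_subspace (s : nat) (F : fieldType) (E : ('rV[int]_s -> F) -> Prop) : Prop :=
  exists m (th : 'I_m -> 'rV[int]_s -> F),
    (forall j, is_character (th j)) /\ (forall g, E g <-> span th g).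

Definition period_lattice (s : nat) (F : Type) (E : ('rV[int]_s -> F) -> Prop)
  (v : 'rV[int]_s) : Prop :=
  forall f, E f -> transl v f = f.

Definition characteristic_sublattice (s : nat) (F : fieldType) (L : 'rV[int]_s -> Prop) : Prop :=
  exists m (th : 'I_m -> 'rV[int]_s -> F),
    (forall j, is_character (th j)) /\ (forall v, L v <-> forall j, th j v = 1).

(* L has index n in Z^s: 'I_n indexes a complete irredundant system of coset
   representatives *)
Definition has_index (s : nat) (L : 'rV[int]_s -> Prop) (n : nat) : Prop :=
  exists reps : 'I_n -> 'rV[int]_s, forall v, exists! i, L (v - reps i).

(* If the period lattice contains N Z^s with p not dividing N, every f in E is
   N-periodic, and discrete Fourier analysis on (Z/N)^s, with a primitive N-th
   root of unity z of F, writes f as a combination of the characters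
   x |-> z^(a.x).  Each Fourier component of f is an average of translates of
   f, hence lies in E, so the characters lying in E span E.  Conversely, if
   characters span E, the period lattice is the intersection of their kernels;
   as F is algebraic over F_p, their values are roots of unity of an order
   N = p^M - 1 prime to p, so the lattice contains N Z^s and its index divides
   N^s.  Finally a lattice of index n contains n Z^s. *)

From HB Require Import structures.
From mathcomp Require Import all_boot all_order all_algebra.
From mathcomp Require Import fingroup cyclic separable cyclotomic.
From mathcomp Require Import zify ring.
From mathcomp Require Import boolp.
Set Implicit Arguments. Unset Strict Implicit. Unset Printing Implicit Defensive.
Import GRing.Theory Num.Theory.
Local Open Scope ring_scope.

Lemma closed_prim_root_exists (F : closedFieldType) (n : nat) :
  (0 < n)%N -> n%:R != 0 :> F -> exists z : F, n.-primitive_root z.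
Proof.
move=> n_gt0 n_neq0.
have [r Xn1_split] := closed_field_poly_normal ('X^n - 1 : {poly F}).
rewrite (monicP (monicXnsubC 1 n_gt0)) scale1r in Xn1_split.
have r_unity : all n.-unity_root r.
  by apply/allP => x; rewrite -root_prod_XsubC -Xn1_split.
have r_uniq : uniq r by rewrite -separable_prod_XsubC -Xn1_split separable_Xn_sub_1.
have size_r : (n < (size r).+1)%N.
  by rewrite -(size_prod_XsubC r id) -Xn1_split size_XnsubC.
by have /hasP [z _] := has_prim_root n_gt0 r_unity r_uniq size_r; exists z.
Qed.

Lemma absz_modz_lt (N : nat) (y : int) : (0 < N)%N -> (`|(y %% N%:Z)%Z| < N)%N.
Proof.
by move=> N_gt0; rewrite -ltz_nat abszE ger0_norm ?modz_ge0 ?ltz_pmod // eqz_nat -lt0n.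
Qed.

Section FourierAnalysis.

Variables (F : fieldType) (s N : nat) (z : F).
Hypothesis prim_z : N.-primitive_root z.

(* [box] = {0,...,N-1}^s indexes both (Z/N)^s and its characters [box_char a]. *)
Local Notation box := {ffun 'I_s -> 'I_N}.

Lemma prim_root_neq0 : z != 0.
Proof. by rewrite (prim_root_eq0 prim_z) -lt0n (prim_order_gt0 prim_z). Qed.

Lemma prim_exprz_eq1 (y : int) : (z ^ y == 1) = (N%:Z %| y)%Z.
Proof.
rewrite dvdzE; case: y => m /=; first by rewrite -(prim_order_dvd prim_z).
by rewrite NegzE -invr_expz invr_eq1 -(prim_order_dvd prim_z).
Qed.

Lemma sum_prim_root_exprz (y : int) :
  \sum_(k < N) z ^ (k%:Z * y) = if (N%:Z %| y)%Z then N%:R else 0.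
Proof.
rewrite (eq_bigr (fun k : 'I_N => (z ^ y) ^+ k)) => [|k _]; last by rewrite mulrC -exprz_exp.
case: ifP => N_dvd_y.
  have /eqP -> : z ^ y == 1 by rewrite prim_exprz_eq1.
  by rewrite (eq_bigr (fun _ => 1)) => [|k _]; rewrite ?expr1n // sumr_const card_ord.
have zy_neq1 : z ^ y - 1 != 0 by rewrite subr_eq0 prim_exprz_eq1 N_dvd_y.
have zyN : (z ^ y) ^+ N = 1.
  by rewrite -[_ ^+ N]/((z ^ y) ^ N%:Z) exprzAC -[z ^ N%:Z]/(z ^+ N)
             prim_expr_order // exp1rz.
have := subrX1 (z ^ y) N; rewrite zyN subrr => /esym /eqP.
by rewrite mulf_eq0 (negPf zy_neq1) => /eqP.
Qed.

Definition box_vec (b : box) : 'rV[int]_s := \row_i (b i)%:Z.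

Definition box_char (a : box) (x : 'rV[int]_s) : F :=
  \prod_(i < s) z ^ ((a i)%:Z * x 0 i).

Lemma box_char_is_character (a : box) : is_character (box_char a).
Proof.
split; first by rewrite /box_char big1 // => i _; rewrite mxE mulr0 expr0z.
move=> u v; rewrite /box_char -big_split; apply: eq_bigr => i _.
by rewrite mxE mulrDr expfzDr ?prim_root_neq0.
Qed.

Lemma box_charD (a : box) (u v : 'rV[int]_s) :
  box_char a (u + v) = box_char a u * box_char a v.
Proof. exact: (box_char_is_character a).2. Qed.

Lemma sum_box_char (y : 'rV[int]_s) :
  \sum_(a : box) box_char a y =
    if [forall i, (N%:Z %| y 0%R i)%Z] then N%:R ^+ s else 0.
Proof.
rewrite /box_char -(bigA_distr_bigA (fun i (k : 'I_N) => z ^ (k%:Z * y 0 i))).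
under eq_bigr do rewrite sum_prim_root_exprz.
case: ifP => [/forallP N_dvd_y | /negbT].
  by rewrite (eq_bigr (fun _ => N%:R)) ?prodr_const ?card_ord // => i _; rewrite N_dvd_y.
by rewrite negb_forall => /existsP [i /negPf N_ndvd_yi]; rewrite (bigD1 i) //= N_ndvd_yi mul0r.
Qed.

Lemma box_char_orthogonal (a a' : box) :
  \sum_(b : box) box_char a (- box_vec b) * box_char a' (box_vec b) =
    if a' == a then N%:R ^+ s else 0.
Proof.
have z_neq0 := prim_root_neq0.
rewrite /box_char.
under eq_bigr => b _.
  rewrite -big_split /=; under eq_bigr => i _.
    rewrite !mxE -expfzDr // mulrN -mulNr -mulrDl addrC mulrC.
  over.
over.
rewrite -(bigA_distr_bigA (fun i (k : 'I_N) => z ^ (k%:Z * ((a' i)%:Z - (a i)%:Z)))).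
have dvd_diff (m n : 'I_N) : (N%:Z %| m%:Z - n%:Z)%Z = (m == n).
  by rewrite -eqz_mod_dvd !modz_small ?ltz_nat ?ltn_ord.
under eq_bigr do rewrite sum_prim_root_exprz dvd_diff.
case: eqP => [-> | a'_neq_a].
  by rewrite (eq_bigr (fun _ => N%:R)) ?prodr_const ?card_ord // => i _; rewrite eqxx.
have [i /negPf a'i_neq] : exists i, a' i != a i.
  apply/existsP; rewrite -negb_forall; apply: contra_notN a'_neq_a => /forallP h.
  by apply/ffunP => i; apply/eqP.
by rewrite (bigD1 i) //= a'i_neq mul0r.
Qed.

Definition box_reduce (x : 'rV[int]_s) : box :=
  [ffun i => Ordinal (absz_modz_lt (x 0 i) (prim_order_gt0 prim_z))].

Lemma box_reduce_val (x : 'rV[int]_s) i : (box_reduce x i)%:Z = (x 0%R i %% N%:Z)%Z.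
Proof.
have N_gt0 := prim_order_gt0 prim_z.
by rewrite ffunE /= abszE ger0_norm ?modz_ge0 // eqz_nat -lt0n.
Qed.

Lemma box_reduceK (x : 'rV[int]_s) :
  x = box_vec (box_reduce x) + (\row_i (x 0%R i %/ N%:Z)%Z) *+ N.
Proof.
apply/matrixP => i j; rewrite !mxE mulmxnE !mxE box_reduce_val (ord1 i).
by rewrite {1}(divz_eq (x 0 j) N%:Z) addrC -[in RHS]mulr_natr natz.
Qed.

Lemma box_reduce_eq (x : 'rV[int]_s) (b : box) :
  [forall i, (N%:Z %| (- box_vec b + x) 0%R i)%Z] = (b == box_reduce x).
Proof.
apply/forallP/eqP => [N_dvd | -> i]; last by rewrite !mxE addrC -eqz_mod_dvd box_reduce_val modz_mod.
apply/ffunP => i; apply/val_inj/eqP; rewrite -eqz_nat box_reduce_val.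
move: (N_dvd i); rewrite !mxE addrC -eqz_mod_dvd => /eqP ->.
by rewrite modz_small // lez_nat ltz_nat ltn_ord.
Qed.

Hypothesis N_neq0 : N%:R != 0 :> F.

Definition fourier_coef (f : 'rV[int]_s -> F) (a : box) : F :=
  (N%:R ^+ s)^-1 * \sum_(b : box) box_char a (- box_vec b) * f (box_vec b).

Section Periodic.

Variable f : 'rV[int]_s -> F.
Hypothesis f_periodic : forall x w, f (x + w *+ N) = f x.

Lemma fourier_expansion (x : 'rV[int]_s) :
  f x = \sum_(a : box) fourier_coef f a * box_char a x.
Proof.
rewrite /fourier_coef; under eq_bigr => a _ do rewrite -mulrA mulr_suml.
rewrite -mulr_sumr exchange_big /=.
under eq_bigr => b _.
  under eq_bigr => a _ do rewrite mulrAC -box_charD.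
  rewrite -mulr_suml sum_box_char box_reduce_eq.
  over.
rewrite (bigD1 (box_reduce x)) //= eqxx big1 => [|b /negPf ->]; last by rewrite mul0r.
rewrite addr0 mulrA mulVf ?expf_neq0 // mul1r.
by rewrite {1}(box_reduceK x) f_periodic.
Qed.

Lemma fourier_component (a : box) (x : 'rV[int]_s) :
  \sum_(b : box) ((N%:R ^+ s)^-1 * box_char a (- box_vec b)) * f (x + box_vec b)
  = fourier_coef f a * box_char a x.
Proof.
have reassoc (A B C D G : F) : A * B * (C * (D * G)) = C * D * (A * (B * G)).
  by ring.
under eq_bigr => b _.
  rewrite fourier_expansion mulr_sumr.
  under eq_bigr => a' _ do rewrite box_charD reassoc.
  over.
rewrite exchange_big /=.
under eq_bigr => a' _ do rewrite -!mulr_sumr box_char_orthogonal.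
rewrite (bigD1 a) //= eqxx big1 => [|a' /negPf ->]; last by rewrite !mulr0.
by rewrite addr0 mulVf ?expf_neq0 // mulr1.
Qed.

End Periodic.

End FourierAnalysis.

Lemma fin_dim_subspace_lincomb (F : fieldType) (s : nat) (E : ('rV[int]_s -> F) -> Prop)
    (I : finType) (c : I -> F) (h : I -> 'rV[int]_s -> F) :
  fin_dim_subspace E -> (forall i, E (h i)) -> E (fun x => \sum_i c i * h i x).
Proof.
move=> [n [fs E_span]] Eh.
have /choice [d hd] : forall i, exists d : 'I_n -> F,
    forall x, h i x = \sum_(k < n) d k * fs k x by move=> i; apply/E_span.
apply/E_span; exists (fun k => \sum_i c i * d i k) => x.
under eq_bigr => i _ do rewrite hd mulr_sumr.
rewrite exchange_big /=; apply: eq_bigr => k _.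
by rewrite mulr_suml; apply: eq_bigr => i _; rewrite mulrA.
Qed.

Section PeriodicSubspace.

Variables (F : fieldType) (s N : nat) (z : F) (E : ('rV[int]_s -> F) -> Prop).
Hypotheses (prim_z : N.-primitive_root z) (N_neq0 : N%:R != 0 :> F).
Hypotheses (E_fin : fin_dim_subspace E) (E_inv : transl_invariant E).
Hypothesis E_periodic : forall f, E f -> forall x w, f (x + w *+ N) = f x.

Lemma box_char_mem (g : 'rV[int]_s -> F) (a : {ffun 'I_s -> 'I_N}) :
  E g -> fourier_coef z g a != 0 -> E (box_char z a).
Proof.
move=> Eg coef_neq0; set c := fourier_coef z g a.
have E_component : E (fun x => c * box_char z a x).
  have -> : (fun x => c * box_char z a x) = fun x => \sum_(b : {ffun 'I_s -> 'I_N})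
      ((N%:R ^+ s)^-1 * box_char z a (- box_vec b)) * transl (box_vec b) g x.
    by apply: funext => x; rewrite (fourier_component prim_z N_neq0 (E_periodic Eg)).
  by apply: fin_dim_subspace_lincomb => // b; apply: E_inv.
have -> : box_char z a = fun x => \sum_(i < 1) c^-1 * (c * box_char z a x).
  by apply: funext => x; rewrite big_ord1 mulKf.
exact: fin_dim_subspace_lincomb.
Qed.

Lemma characteristic_of_periodic : characteristic_subspace E.
Proof.
pose S := [set a : {ffun 'I_s -> 'I_N} | `[< E (box_char z a) >]].
exists #|S|, (fun i => box_char z (enum_val i)); split=> [i | g].
  exact: box_char_is_character.
split=> [Eg | [c g_span]].
  exists (fun i => fourier_coef z g (enum_val i)) => x.
  rewrite (fourier_expansion prim_z N_neq0 (E_periodic Eg)).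
  rewrite -(big_enum_val (fun a => fourier_coef z g a * box_char z a x)) /=.
  rewrite [RHS]big_mkcond /=; apply: eq_bigr => a _; case: ifP => // a_notin_S.
  have [-> | coef_neq0] := eqVneq (fourier_coef z g a) 0; first by rewrite mul0r.
  by move: a_notin_S; rewrite inE => /negbT/asboolP/(_ (box_char_mem Eg coef_neq0)).
have -> : g = fun x => \sum_i c i * box_char z (enum_val i) x by apply: funext.
apply: fin_dim_subspace_lincomb => // i.
by have := enum_valP i; rewrite inE => /asboolP.
Qed.

End PeriodicSubspace.

Definition is_subgroup (s : nat) (L : 'rV[int]_s -> Prop) : Prop :=
  L 0 /\ forall u v, L u -> L v -> L (u - v).

Section Subgroup.

Variables (s : nat) (L : 'rV[int]_s -> Prop).
Hypothesis L_sub : is_subgroup L.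

Lemma subgroup0 : L 0. Proof. exact: L_sub.1. Qed.

Lemma subgroupB u v : L u -> L v -> L (u - v). Proof. exact: L_sub.2. Qed.

Lemma subgroupN u : L u -> L (- u).
Proof. by rewrite -sub0r; apply: subgroupB; apply: subgroup0. Qed.

Lemma subgroupD u v : L u -> L v -> L (u + v).
Proof. by move=> Lu Lv; rewrite -[v]opprK; apply/subgroupB/subgroupN. Qed.

Lemma subgroup_sum (I : finType) (w : I -> 'rV[int]_s) :
  (forall i, L (w i)) -> L (\sum_i w i).
Proof. by move=> Lw; apply: big_ind => //; [apply: subgroup0 | apply: subgroupD]. Qed.

Lemma subgroupMn u n : L u -> L (u *+ n).
Proof.
move=> Lu; elim: n => [|n IHn]; first by rewrite mulr0n; apply: subgroup0.
by rewrite mulrS; apply: subgroupD.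
Qed.

Lemma subgroupZ (a : int) u : L u -> L (a *: u).
Proof.
move=> Lu; case: a => n; first by rewrite -natz scaler_nat; apply: subgroupMn.
by rewrite NegzE scaleNr -natz scaler_nat; apply/subgroupN/subgroupMn.
Qed.

Lemma subgroup_congr a b : L (a - b) -> (L a <-> L b).
Proof.
move=> Lab; split=> [La | Lb]; first by rewrite -(subKr a b); apply: subgroupB.
by rewrite -(subrK b a); apply: subgroupD.
Qed.

Lemma subgroup_trans_r u v w : L (u - w) -> L (v - w) -> L (u - v).
Proof.
move=> Luw Lvw; have -> : u - v = (u - w) - (v - w) by rewrite opprB subrKA.
exact: subgroupB.
Qed.

Lemma subgroup_trans_l u v w : L (w - u) -> L (w - v) -> L (u - v).
Proof.
move=> Lwu Lwv; have -> : u - v = (w - v) - (w - u) by rewrite opprB [RHS]addrC subrKA.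
exact: subgroupB.
Qed.

(* Translation by [v] permutes the cosets, so the sum of the
   [reps i + v - reps (sg i)] collapses to [v *+ n]. *)
Lemma has_index_mulrn n : has_index L n -> forall v, L (v *+ n).
Proof.
move=> [reps reps_uniq] v.
have /choice [sg sgP] : forall i, exists j, L (reps i + v - reps j).
  by move=> i; have [j [Lj _]] := reps_uniq (reps i + v); exists j.
have sg_inj : injective sg.
  move=> i j sg_ij; have := sgP j; rewrite -sg_ij => /(subgroup_trans_r (sgP i)).
  rewrite [reps j + v]addrC addrKA => Lij.
  have [k [_ k_uniq]] := reps_uniq (reps i).
  by rewrite -(k_uniq j Lij) (k_uniq i) // subrr; apply: subgroup0.
have := subgroup_sum sgP; rewrite sumrB big_split /= sumr_const card_ord.
by rewrite -(reindex_inj sg_inj (F := reps) (P := xpredT)) /= addrAC subrr add0r.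
Qed.

End Subgroup.

Lemma has_index_gt0 (s : nat) (L : 'rV[int]_s -> Prop) n : has_index L n -> (0 < n)%N.
Proof. by move=> [reps /(_ 0) [[m m_lt_n] _]]; apply: leq_ltn_trans m_lt_n. Qed.

Section FiniteIndex.

Variables (s K : nat) (L : 'rV[int]_s -> Prop).
Hypotheses (L_sub : is_subgroup L) (L_mulrn : forall v, L (v *+ K.+1)).

(* (Z/(K+1))^s is ['rV['I_K.+1]_s], a finGroupType under addition; [L] is the
   preimage of its image [lift_subgroup] there, so the cosets of [L] match those
   of [lift_subgroup], whose number divides (K+1)^s by Lagrange. *)
Definition row_lift (x : 'rV['I_K.+1]_s) : 'rV[int]_s := \row_i (x 0 i)%:Z.

Definition row_reduce (v : 'rV[int]_s) : 'rV['I_K.+1]_s :=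
  \row_j Ordinal (absz_modz_lt (v 0 j) (ltn0Sn K)).

Lemma row_lift_reduce v : L (v - row_lift (row_reduce v)).
Proof.
have -> : v - row_lift (row_reduce v) = ((\row_j (v 0%R j %/ K.+1%:Z)%Z) *+ K.+1).
  apply/matrixP => i j; rewrite !mxE mulmxnE !mxE (ord1 i) /= abszE.
  rewrite ger0_norm ?modz_ge0 // {1}(divz_eq (v 0 j) K.+1%:Z) addrK.
  by rewrite -mulr_natr natz.
exact: L_mulrn.
Qed.

Lemma row_liftD x y : L (row_lift x + row_lift y - row_lift (x + y)).
Proof.
have -> : row_lift x + row_lift y - row_lift (x + y) =
    (\row_i ((x 0%R i + y 0%R i) %/ K.+1)%N%:Z) *+ K.+1.
  apply/matrixP => i j; rewrite !mxE mulmxnE !mxE /=.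
  have := divn_eq (x 0 j + y 0 j) K.+1; lia.
exact: L_mulrn.
Qed.

Definition lift_subgroup : {set 'rV['I_K.+1]_s} := [set x | `[< L (row_lift x) >]].

Lemma lift_subgroup_group_set : group_set lift_subgroup.
Proof.
apply/group_setP; split=> [|x y]; rewrite !inE.
  have -> : row_lift 1%g = 0 by apply/matrixP => i j; rewrite !mxE.
  exact/asboolP/(subgroup0 L_sub).
move=> /asboolP Lx /asboolP Ly; apply/asboolP.
by apply/(subgroup_congr L_sub (row_liftD x y)); apply: subgroupD.
Qed.

Canonical lift_subgroup_group := Group lift_subgroup_group_set.

Lemma mem_rcoset_lift x y :
  (x \in lift_subgroup :* y)%g <-> L (row_lift x - row_lift y).
Proof.
rewrite mem_rcoset inE asboolE [(x * y^-1)%g]/(x - y); apply: (subgroup_congr L_sub).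
by have := row_liftD (x - y) y; rewrite subrK opprB addrA.
Qed.

Lemma subgroup_index_dvd : exists2 n, has_index L n & (n %| K.+1 ^ s)%N.
Proof.
pose P := rcosets lift_subgroup [set: 'rV['I_K.+1]_s].
exists #|P|; last first.
  by have := dvdn_indexg [set: 'rV['I_K.+1]_s]%G lift_subgroup_group;
     rewrite cardsT card_mx card_ord mul1n.
exists (fun i => row_lift (repr (enum_val i))) => v.
set C := (lift_subgroup :* row_reduce v)%g.
have C_P : C \in P by apply/rcosetsP; exists (row_reduce v); rewrite ?inE.
exists (enum_rank_in C_P C); split=> [|j Lj].
  rewrite /= enum_rankK_in //; apply: (subgroup_trans_r L_sub (row_lift_reduce v)).
  exact/mem_rcoset_lift/mem_repr_rcoset.
apply: enum_val_inj; rewrite enum_rankK_in //.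
have /rcosetsP [y _ Dj] := enum_valP j; rewrite Dj in Lj *.
have /mem_rcoset_lift/rcoset_eqP := subgroup_trans_l L_sub Lj (row_lift_reduce v).
by rewrite /C -[lift_subgroup]/(gval lift_subgroup_group) rcoset_repr => ->.
Qed.

End FiniteIndex.

Section Characters.

Variables (s : nat) (F : fieldType) (th : 'rV[int]_s -> F).
Hypothesis th_char : is_character th.

Lemma character_neq0 u : th u != 0.
Proof.
have [th0 thD] := th_char; apply/eqP => thu0.
by have := thD u (- u); rewrite subrr th0 thu0 mul0r; apply/eqP; rewrite oner_eq0.
Qed.

Lemma characterN u : th (- u) = (th u)^-1.
Proof.
have [th0 thD] := th_char; apply: (mulfI (character_neq0 u)).
by rewrite -thD subrr th0 divff ?character_neq0.
Qed.

Lemma characterMn u n : th (u *+ n) = th u ^+ n.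
Proof.
have [th0 thD] := th_char.
by elim: n => [|n IHn]; rewrite ?mulr0n ?th0 // mulrS thD IHn exprS.
Qed.

End Characters.

Lemma characteristic_sublattice_subgroup (s : nat) (F : fieldType) (L : 'rV[int]_s -> Prop) :
  characteristic_sublattice F L -> is_subgroup L.
Proof.
move=> [m [th [th_char L_ker]]]; split; first by apply/L_ker => j; case: (th_char j).
move=> u v /L_ker Lu /L_ker Lv; apply/L_ker => j.
by rewrite (th_char j).2 characterN // Lu Lv invr1 mulr1.
Qed.

Lemma period_lattice_subgroup (s : nat) (F : Type) (E : ('rV[int]_s -> F) -> Prop) :
  is_subgroup (period_lattice E).
Proof.
split=> [f _ | u v Lu Lv f Ef]; apply: funext => x; rewrite /transl ?addr0 //.
have /(congr1 (@^~ (x + (u - v)))) := Lv f Ef; rewrite /transl -addrA subrK => <-.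
exact: (congr1 (@^~ x) (Lu f Ef)).
Qed.

Lemma period_lattice_characteristic (s : nat) (F : fieldType) (E : ('rV[int]_s -> F) -> Prop) :
  characteristic_subspace E -> characteristic_sublattice F (period_lattice E).
Proof.
move=> [m [th [th_char E_span]]]; exists m, th; split=> // v; split=> [Lv j | th_v f].
  have E_thj : E (th j).
    apply/E_span; exists (fun i => (i == j)%:R) => x.
    by rewrite (bigD1 j) //= eqxx mul1r big1 ?addr0 // => i /negPf ->; rewrite mul0r.
  by have /(congr1 (@^~ 0)) := Lv _ E_thj; rewrite /transl add0r => ->; case: (th_char j).
move=> /E_span [c f_span]; apply: funext => x; rewrite /transl !f_span.
by apply: eq_bigr => i _; rewrite (th_char i).2 th_v mulr1.
Qed.

Lemma expr_expnM_fixed (R : pzSemiRingType) (x : R) (p n t : nat) :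
  x ^+ (p ^ n) = x -> x ^+ (p ^ (n * t)) = x.
Proof.
by move=> x_fixed; elim: t => [|t IHt]; rewrite ?muln0 ?expr1 // mulnS expnD exprM x_fixed.
Qed.

Lemma algebraic_over_Fp_unity (F : fieldType) (p : nat) (I : finType) (x : I -> F) :
  prime p -> algebraic_over_Fp F p -> (forall i, x i != 0) ->
  exists N, [/\ (0 < N)%N, coprime N p & forall i, x i ^+ N = 1].
Proof.
move=> p_prime F_alg x_neq0.
have /choice [e e_spec] : forall i, exists e, (0 < e)%N /\ x i ^+ (p ^ e) = x i.
  by move=> i; have [e e_gt0 xe] := F_alg (x i); exists e.
pose M := (\prod_i e i)%N.
have M_gt0 : (0 < M)%N by apply: prodn_gt0 => i; case: (e_spec i).
have pM_gt0 : (0 < p ^ M)%N by rewrite expn_gt0 prime_gt0.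
exists (p ^ M).-1; split.
- by rewrite -ltnS prednK // -[1%N](expn0 p) ltn_exp2l ?prime_gt1.
- have p_dvd_pM : (p %| p ^ M)%N by rewrite -(prednK M_gt0) expnS dvdn_mulr.
  exact: coprime_dvdr p_dvd_pM (coprimePn pM_gt0).
move=> i; apply: (mulIf (x_neq0 i)); rewrite mul1r -exprSr prednK //.
have [_ xe] := e_spec i.
by rewrite /M (bigD1 i) //= expr_expnM_fixed.
Qed.

Lemma characteristic_sublattice_mulrn (p : nat) (F : fieldType) (s : nat)
    (L : 'rV[int]_s -> Prop) :
  prime p -> algebraic_over_Fp F p -> characteristic_sublattice F L ->
  exists N, [/\ (0 < N)%N, coprime N p & forall v, L (v *+ N)].
Proof.
move=> p_prime F_alg L_char; have L_sub := characteristic_sublattice_subgroup L_char.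
have [m [th [th_char L_ker]]] := L_char.
have [N [N_gt0 N_coprime thN]] := algebraic_over_Fp_unity
  (x := fun jk : 'I_m * 'I_s => th jk.1 'e_jk.2) p_prime F_alg
  (fun jk => character_neq0 (th_char jk.1) _).
exists N; split=> // v; rewrite [v]row_sum_delta -sumrMnl.
apply: (subgroup_sum L_sub) => k; rewrite scalerMnr; apply: (subgroupZ L_sub).
by apply/L_ker => j; rewrite characterMn // (thN (j, k)).
Qed.

Theorem proposition5p11 (p : nat) (F : closedFieldType)
  (hp : prime p) (hchar : p \in [pchar F]) (halg : algebraic_over_Fp F p)
  (s : nat) (E : ('rV[int]_s -> F) -> Prop)
  (hE : fin_dim_subspace E) (hinv : transl_invariant E) :
  (characteristic_subspace E <-> characteristic_sublattice F (period_lattice E)) /\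
  (characteristic_subspace E <->
     exists2 n : nat, has_index (period_lattice E) n & coprime n p).
Proof.
have L_sub := period_lattice_subgroup E.
have CS_CL := @period_lattice_characteristic s F E.
have CL_index : characteristic_sublattice F (period_lattice E) ->
    exists2 n, has_index (period_lattice E) n & coprime n p.
  move=> /(characteristic_sublattice_mulrn hp halg) [[|K] [//= _ K1_coprime L_mulrn]].
  have [n L_index n_dvd] := subgroup_index_dvd L_sub L_mulrn.
  by exists n; last exact: coprime_dvdl n_dvd (coprimeXl s K1_coprime).
have index_CS : (exists2 n, has_index (period_lattice E) n & coprime n p) ->
    characteristic_subspace E.
  move=> [n L_index n_coprime].
  have n_neq0 : n%:R != 0 :> F.
    by rewrite -(dvdn_pcharf hchar) -prime_coprime // coprime_sym.
  have [z prim_z] := closed_prim_root_exists (has_index_gt0 L_index) n_neq0.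
  apply: (characteristic_of_periodic prim_z n_neq0 hE hinv) => f Ef x w.
  exact: (congr1 (@^~ x) (has_index_mulrn L_sub L_index w f Ef)).
tauto.
Qed.
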